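(* Let $\mathbb{L}=(\mathcal{P},\mathcal{C},\parallel)$ be a Laguerre plane satisfying axioms (C) and (S). If $K,L,M,N$ are circles and $a,b,c,d$ are points such that $K\cap L=\{a\}$, $L\cap M=\{b\}$, $M\cap N=\{c\}$, $N\cap K=\{d\}$ and $a\parallel c$, then $b\parallel d$.
   Context: A Laguerre plane is a triple $(\mathcal{P},\mathcal{C},\parallel)$ where $\mathcal{P}$ is a set of points, $\mathcal{C}\subset 2^{\mathcal{P}}$ a set of circles and $\parallel$ an equivalence relation on $\mathcal{P}$ (parallelism; its classes are called generators) such that: (1) any three pairwise non-parallel points lie on a unique circle; (2) for every circle $K$ and non-parallel points $p\in K$, $q\notin K$ there is exactly one circle $L$ with $q\in L$ and $K\cap L=\{p\}$; (3) for every point $p$ and circle $K$ there is exactly one point $q\in K$ with $q\parallel p$; (4) some circle contains at least three but not all points. Circles $K,L$ are tangent at $p$ if $K\cap L=\{p\}$ or $K=L$ (with $p\in K$). For $p\in K$, $\langle p,K\rangle$ denotes the set of circles tangent to $K$ at $p$. Axiom (C): for any circles $K,L$ and any point $p\in K\setminus L$ there exists exactly one circle $M\in\langle p,K\rangle$ with $|M\cap L|=1$. Axiom (S): if $K,L,M,N$ are circles and $a,b,c,d$ points with $K\cap L=\{a\}$, $L\cap M=\{b\}$, $M\cap N=\{c\}$, $N\cap K=\{d\}$ and $a\nparallel c$, then there is a circle containing $a,b,c,d$. *)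

(* A Laguerre plane (P, C, ||): points form a type [P], circles
   are subsets of points (predicates [P -> Prop]) singled out by [isC],
   parallelism is a relation [par] on points. Equality of circles is set
   equality (extensional). *)
From Stdlib Require Import Classical.

Section Laguerre.
Variable P : Type.
Variable isC : (P -> Prop) -> Prop.
Variable par : P -> P -> Prop.

Definition set_eq (K L : P -> Prop) : Prop := forall x, K x <-> L x.

Definition meet1 (K L : P -> Prop) (p : P) : Prop :=
  forall x, (K x /\ L x) <-> x = p.

Definition meets_once (K L : P -> Prop) : Prop := exists p, meet1 K L p.

Definition tangent_at (K L : P -> Prop) (p : P) : Prop :=
  meet1 K L p \/ (set_eq K L /\ K p).

Definition is_laguerre_plane : Prop :=
  (forall x, par x x) /\
  (forall x y, par x y -> par y x) /\
  (forall x y z, par x y -> par y z -> par x z) /\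
  (forall p q r, ~ par p q -> ~ par q r -> ~ par p r ->
     (exists K, isC K /\ K p /\ K q /\ K r) /\
     (forall K L, isC K -> isC L -> K p -> K q -> K r -> L p -> L q -> L r ->
        set_eq K L)) /\
  (forall K p q, isC K -> K p -> ~ K q -> ~ par p q ->
     (exists L, isC L /\ L q /\ meet1 K L p) /\
     (forall L L', isC L -> isC L' -> L q -> meet1 K L p ->
        L' q -> meet1 K L' p -> set_eq L L')) /\
  (forall p K, isC K ->
     (exists q, K q /\ par q p) /\
     (forall q q', K q -> par q p -> K q' -> par q' p -> q = q')) /\
  (exists K, isC K /\ (exists x y z, K x /\ K y /\ K z /\ x <> y /\ y <> z /\ x <> z)
     /\ (exists w, ~ K w)).

Definition axiom_C : Prop :=
  forall K L p, isC K -> isC L -> K p -> ~ L p ->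
    (exists M, isC M /\ tangent_at M K p /\ meets_once M L) /\
    (forall M M', isC M -> tangent_at M K p -> meets_once M L ->
       isC M' -> tangent_at M' K p -> meets_once M' L -> set_eq M M').

Definition axiom_S : Prop :=
  forall K L M N a b c d, isC K -> isC L -> isC M -> isC N ->
    meet1 K L a -> meet1 L M b -> meet1 M N c -> meet1 N K d ->
    ~ par a c ->
    exists O, isC O /\ O a /\ O b /\ O c /\ O d.

End Laguerre.

(* If b and d were not parallel, axiom (S) applied to the rotated quadrilateral
   L, M, N, K would give a circle through a, b, c, d.  A circle meets the
   generator of a in a single point, so a ∥ c forces a = c; then a lies on all
   four circles, hence a = b = d, contradicting b ∦ d. *)
From Stdlib Require Import Classical.

Section Laguerre.
Variable P : Type.
Variable isC : (P -> Prop) -> Prop.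
Variable par : P -> P -> Prop.

Lemma meet1_mem (K L : P -> Prop) (p : P) : meet1 P K L p -> K p /\ L p.
Proof. intros h. exact (proj2 (h p) eq_refl). Qed.

Lemma meet1_uniq (K L : P -> Prop) (p x : P) :
  meet1 P K L p -> K x -> L x -> x = p.
Proof. intros h Kx Lx. exact (proj1 (h x) (conj Kx Lx)). Qed.

Lemma meet1_quadrilateral_collapse (K L M N : P -> Prop) (a b d : P) :
  meet1 P K L a -> meet1 P L M b -> meet1 P M N a -> meet1 P N K d ->
  b = a /\ d = a.
Proof.
  intros hKL hLM hMN hNK.
  destruct (meet1_mem _ _ _ hKL) as [Ka La].
  destruct (meet1_mem _ _ _ hMN) as [Ma Na].
  split; symmetry.
  - exact (meet1_uniq _ _ _ _ hLM La Ma).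
  - exact (meet1_uniq _ _ _ _ hNK Na Ka).
Qed.

Hypothesis laguerre : is_laguerre_plane P isC par.

Lemma par_refl (x : P) : par x x.
Proof. destruct laguerre as [refl _]. apply refl. Qed.

Lemma circle_par_eq (O : P -> Prop) (x y : P) :
  isC O -> O x -> O y -> par x y -> x = y.
Proof.
  intros iO Ox Oy hxy.
  destruct laguerre as [_ [_ [_ [_ [_ [generator _]]]]]].
  exact (proj2 (generator y O iO) x y Ox hxy Oy (par_refl y)).
Qed.

End Laguerre.

Theorem proposition2p2 (P : Type) (isC : (P -> Prop) -> Prop) (par : P -> P -> Prop) :
  is_laguerre_plane P isC par ->
  axiom_C P isC ->
  axiom_S P isC par ->
  forall (K L M N : P -> Prop) (a b c d : P),
    isC K -> isC L -> isC M -> isC N ->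
    meet1 P K L a -> meet1 P L M b -> meet1 P M N c -> meet1 P N K d ->
    par a c -> par b d.
Proof.
  intros laguerre _ axS K L M N a b c d iK iL iM iN hKL hLM hMN hNK hac.
  destruct (classic (par b d)) as [hbd | hbd]; [exact hbd | exfalso].
  destruct (axS L M N K b c d a iL iM iN iK hLM hMN hNK hKL hbd)
    as [O [iO [_ [Oc [_ Oa]]]]].
  assert (a = c) as <- by exact (circle_par_eq _ _ _ laguerre O a c iO Oa Oc hac).
  destruct (meet1_quadrilateral_collapse _ _ _ _ _ _ _ _ hKL hLM hMN hNK)
    as [-> ->].
  exact (hbd (par_refl _ _ _ laguerre a)).
Qed.
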